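(* With $S$, $\lambda$ (growing fast enough), $\varphi(x)=x+1$ and $C_{RD}(\mathbb Z_S)$ as in the context, let $B^1_{RD}=\{g\circ\varphi-g:\ g\in C_{RD}(\mathbb Z_S)\}$. Then the first rapid decay cohomology group $H^1_{RD}(\mathbb Z_S,\varphi)=C_{RD}(\mathbb Z_S)/B^1_{RD}$ is isomorphic to $\mathbb C$, the isomorphism being induced by $f\mapsto\int_{\mathbb Z_S}f\,dx$.
   Context: Odometer $\mathbb Z_S=\varprojlim\mathbb Z/s_m\mathbb Z$ for a scale $(s_m)$ with $S=\mathrm{lcm}(s_m)$ infinite; $dx$ normalized Haar measure; $\varphi(x)=x+1$. Cocycles $\rho:\mathbb N\times\mathbb Z_S\to\mathbb C$ (satisfying $\rho(k+l,x)=\rho(k,x)+\rho(k,\varphi^l(x))$) are determined by $r=\rho(1,\cdot)$ via $\rho(k,x)=\sum_{i=0}^{k-1}r(\varphi^i(x))$; in the rapid decay setting the cocycles correspond to $r\in C_{RD}(\mathbb Z_S)$ and coboundaries to $r=g\circ\varphi-g$ with $g\in C_{RD}(\mathbb Z_S)$, so $H^1_{RD}$ is the quotient above. $\widetilde{\mathbb Z_S}=\{z\in\mathbb C:z^s=1\text{ for some } s\mid S\}$; $\chi_z(1)=z$; $\hat f_z=\int f\chi_{\bar z}dx$; $\lambda$ is a non-archimedean length function ($\lambda:\widetilde{\mathbb Z_S}\to[1,\infty)$, $\lambda(z)=1$ iff $z=1$, $\lambda(z_1z_2)\le\max\{\lambda(z_1),\lambda(z_2)\}$, $\{\lambda\le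 r\}$ finite) growing fast enough ($\lambda(z)\ge c\,\mathrm{ord}(z)^\alpha$ for some $c,\alpha>0$); $\|f\|_N=\sum_z|\hat f_z|\lambda(z)^N$; $C_{RD}(\mathbb Z_S)=\{f\in C(\mathbb Z_S):\|f\|_N<\infty\ \forall N\}$. *)

From HB Require Import structures.
From mathcomp Require Import all_boot all_order all_algebra.
From mathcomp Require Import all_classical all_reals all_analysis.
From mathcomp Require Import complex.
Set Implicit Arguments. Unset Strict Implicit. Unset Printing Implicit Defensive.
Import Order.TTheory GRing.Theory Num.Theory numFieldNormedType.Exports.
Local Open Scope ring_scope.

(* A scale: positive integers s_0 | s_1 | s_2 | ... with S = lcm(s_m) infinite
   (i.e. the s_m are unbounded). *)
Record scale := Scale {
  sc :> nat -> nat;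
  sc_gt0 : forall m, (0 < sc m)%N;
  sc_dvd : forall m, (sc m %| sc m.+1)%N;
  sc_unbdd : forall n, exists m, (n < sc m)%N }.

(* The odometer Z_S = lim_{<-} Z/s_m Z, as compatible sequences of residues. *)
Definition Zs (s : scale) :=
  {x : nat -> nat | forall m, (x m < s m)%N /\ x m = (x m.+1 %% s m)%N}.

Definition zs (s : scale) (x : Zs s) : nat -> nat := proj1_sig x.

Lemma mod_compat (s : scale) (k : nat) m :
  ((k %% s m < s m)%N /\ k %% s m = (k %% s m.+1) %% s m)%N.
Proof.
split; first by rewrite ltn_pmod // sc_gt0.
by rewrite modn_dvdm // sc_dvd.
Qed.

Definition iota (s : scale) (k : nat) : Zs s :=
  exist (fun x : nat -> nat => forall m, (x m < s m)%N /\ x m = (x m.+1 %% s m)%N) (fun m => k %% s m)%N (fun m => mod_compat s k m).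

Lemma phi_compat (s : scale) (x : Zs s) m :
  (((zs x m).+1 %% s m < s m)%N /\
   (zs x m).+1 %% s m = ((zs x m.+1).+1 %% s m.+1) %% s m)%N.
Proof.
split; first by rewrite ltn_pmod // sc_gt0.
rewrite modn_dvdm ?sc_dvd // /zs.
have -> : sval x m = (sval x m.+1 %% s m)%N by case: (proj2_sig x m).
by rewrite -[(_ %% _).+1]addn1 modnDml addn1.
Qed.

Definition phi (s : scale) (x : Zs s) : Zs s :=
  exist (fun y : nat -> nat => forall m, (y m < s m)%N /\ y m = (y m.+1 %% s m)%N) (fun m => (zs x m).+1 %% s m)%N (fun m => phi_compat x m).

Section Odometer.
Variables (R : realType) (s : scale).
Local Notation C := R[i].

Local Notation "`| z |_C" := (ComplexField.Normc.normc z) (format "`| z |_C").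

(* continuity for the profinite topology of Z_S (basic open sets are the
   cylinders {y | y_m = x_m}) *)
Definition Zs_continuous (f : Zs s -> C) : Prop :=
  forall (x : Zs s) (eps : R), 0 < eps ->
    exists m, forall y : Zs s, zs y m = zs x m -> `| f y - f x |_C < eps.

(* Riemann sums for the normalized Haar measure: each level-m cylinder has
   measure 1/s_m, and iota k (k < s_m) is a representative of each of them. *)
Definition haar_avg (f : Zs s -> C) (m : nat) : C :=
  ((s m)%:R)^-1 * \sum_(k < s m) f (iota s k).

Definition haar_int (f : Zs s -> C) : C :=
  Complex (limn (fun m : nat => (complex.Re (haar_avg f m) : R)))
          (limn (fun m : nat => (complex.Im (haar_avg f m) : R))).

(* \widetilde{Z_S} = {z : z^n = 1 for some n | S} *)
Definition in_Zt (z : C) : Prop :=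
  exists n m, (n %| s m)%N /\ z ^+ n = 1.

Definition is_order (z : C) (n : nat) : Prop :=
  [/\ (0 < n)%N, z ^+ n = 1 & forall k, (0 < k < n)%N -> z ^+ k != 1].

Definition level (z : C) : nat :=
  match pselect (exists m, z ^+ s m == 1) with
  | left P => ex_minn P
  | right _ => 0%N
  end.

(* characters chi_z(x) = z^{x_m} for any m with z^{s_m} = 1 *)
Definition chi (z : C) (x : Zs s) : C := z ^+ (zs x (level z)).

Definition fhat (f : Zs s -> C) (z : C) : C :=
  haar_int (fun x => f x * chi (Num.conj z) x).

Definition is_length (lam : C -> R) : Prop :=
  [/\ forall z, in_Zt z -> 1 <= lam z,
      forall z, in_Zt z -> (lam z = 1 <-> z = 1),
      forall z1 z2, in_Zt z1 -> in_Zt z2 ->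
        lam (z1 * z2) <= Num.max (lam z1) (lam z2)
    & forall r : R, exists l : seq C,
        forall z, in_Zt z -> lam z <= r -> z \in l].

Definition grows_fast (lam : C -> R) : Prop :=
  exists (c alpha : R), [/\ 0 < c, 0 < alpha &
    forall z n, in_Zt z -> is_order z n -> c * powR (n%:R) alpha <= lam z].

(* ||f||_N = sum_{z in Zt} |hat f_z| lam(z)^N < oo  (sum of nonnegative terms:
   finite iff all finite partial sums are bounded) *)
Definition rd_norm_finite (lam : C -> R) (f : Zs s -> C) (N : nat) : Prop :=
  exists B : R, forall l : seq C, uniq l -> (forall z, z \in l -> in_Zt z) ->
    \sum_(z <- l) `| fhat f z |_C * lam z ^+ N <= B.

Definition C_RD (lam : C -> R) (f : Zs s -> C) : Prop :=
  Zs_continuous f /\ forall N : nat, rd_norm_finite lam f N.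

End Odometer.

From Pilot Require Import Defs.
From HB Require Import structures.
From mathcomp Require Import all_boot all_order all_algebra.
From mathcomp Require Import all_classical all_reals all_analysis.
From mathcomp Require Import complex.
From mathcomp Require Import ring lra.
From mathcomp Require Import cyclic separable cyclotomic.
Import Order.TTheory GRing.Theory Num.Theory numFieldNormedType.Exports.
Set Implicit Arguments. Unset Strict Implicit. Unset Printing Implicit Defensive.
Local Open Scope classical_set_scope.
Local Open Scope ring_scope.

(* The characters chi_z of Z_S (z a root of unity of order dividing S) satisfy
   chi_z o phi = z chi_z, so the Fourier coefficients of a coboundary g o phi - g
   are (z - 1) hat g_z; in particular the Haar integral (the coefficient at
   z = 1) vanishes on coboundaries, and constants show that it is onto.
   Conversely, a mean-zero f in C_RD is the coboundary of the g with
   hat g_z = hat f_z / (z - 1).  A nontrivial n-th root of unity satisfies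
   |z - 1| >= 1/n, and lam z >= c ord(z)^alpha, so this division costs a fixed
   power of lam and g is again of rapid decay.  Its Fourier series then
   converges absolutely and uniformly, so g is continuous, and f = g o phi - g
   follows from Fourier inversion for continuous functions. *)

Local Notation "`| z |_C" := (ComplexField.Normc.normc z) (format "`| z |_C").

Section ComplexNorm.
Variable R : realType.
Implicit Types x y z : R[i].

Lemma normc_ge0 z : 0 <= `|z|_C.
Proof. by case: z => a b /=; rewrite sqrtr_ge0. Qed.

Lemma normc_distC x y : `|x - y|_C = `|y - x|_C.
Proof. by rewrite -normcN opprB. Qed.

Lemma normc_normr z : ((`|z|_C)%:C)%C = `|z|.
Proof. by case: z => a b; rewrite normc_def. Qed.

Lemma normc_nat n : `|n%:R : R[i]|_C = n%:R.
Proof. by apply: (@complexI R); rewrite normc_normr normr_nat rmorph_nat. Qed.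

Lemma normcX z n : `|z ^+ n|_C = `|z|_C ^+ n.
Proof.
elim: n => [|n IH]; first by rewrite !expr0 Normc.normc1.
by rewrite !exprS Normc.normcM IH.
Qed.

Lemma normc_sum (I : Type) (r : seq I) (P : pred I) (F : I -> R[i]) :
  `|\sum_(i <- r | P i) F i|_C <= \sum_(i <- r | P i) `|F i|_C.
Proof.
elim/big_rec2: _ => [|i a b _ IH]; first by rewrite Normc.normc0.
by apply: le_trans (le_normcD _ _) _; rewrite lerD2l.
Qed.

Lemma normc_ge_Re_abs z : `|complex.Re z| <= `|z|_C.
Proof.
case: z => a b /=; rewrite -sqrtr_sqr; apply: ler_wsqrtr.
by rewrite lerDl sqr_ge0.
Qed.

Lemma normc_ge_Im_abs z : `|complex.Im z| <= `|z|_C.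
Proof.
case: z => a b /=; rewrite -sqrtr_sqr; apply: ler_wsqrtr.
by rewrite lerDr sqr_ge0.
Qed.

Lemma normc_le_ReIm z : `|z|_C <= `|complex.Re z| + `|complex.Im z|.
Proof.
case: z => a b /=.
have h : 0 <= `|a| + `|b| by rewrite addr_ge0.
rewrite -(ger0_norm h) -sqrtr_sqr; apply: ler_wsqrtr.
rewrite sqrrD -(real_normK (num_real a)) -(real_normK (num_real b)).
by rewrite -addrA lerD2l lerDr mulrn_wge0 // mulr_ge0.
Qed.

Lemma ReB x y : complex.Re (x - y) = complex.Re x - complex.Re y.
Proof. by case: x; case: y. Qed.

Lemma ImB x y : complex.Im (x - y) = complex.Im x - complex.Im y.
Proof. by case: x; case: y. Qed.

Lemma Re_sum (I : Type) (r : seq I) (F : I -> R[i]) :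
  complex.Re (\sum_(i <- r) F i) = \sum_(i <- r) complex.Re (F i).
Proof.
elim/big_rec2: _ => // i y1 y2 _ <-.
by case: (F i); case: y2.
Qed.

End ComplexNorm.

Lemma cvgn_distP (R : realType) (v : nat -> R) a :
  v @ \oo --> a <->
  forall e : R, 0 < e -> exists N, forall n, (N <= n)%N -> `|v n - a| < e.
Proof.
split=> [/cvgrPdist_lt H e e0|H].
  by have [N _ HN] := H e e0; exists N => n Hn; rewrite distrC; apply: HN.
apply/cvgrPdist_lt => e e0; have [N HN] := H e e0.
by exists N => // n /= Hn; rewrite distrC; apply: HN.
Qed.

Lemma cauchyn_cvg (R : realType) (v : nat -> R) :
  (forall e : R, 0 < e -> exists N, forall n, (N <= n)%N -> `|v n - v N| < e) ->
  exists a : R, v @ \oo --> a.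
Proof.
move=> H; suff hc : [cvg (v @ \oo) in R] by exists (lim (v @ \oo)).
apply: cauchy_cvg; apply: cauchy_exP => e e0.
have [N HN] := H e e0; exists (v N), N => // n /= Hn.
by rewrite -ball_normE /ball_ /= distrC; apply: HN.
Qed.

Section ComplexSequences.
Variable R : realType.
Implicit Types (u v : nat -> R[i]) (l a b : R[i]).

Definition cvgC u l :=
  forall e : R, 0 < e -> exists N, forall n, (N <= n)%N -> `|u n - l|_C < e.

Lemma cvgC_lim u l : cvgC u l ->
  Complex (limn (fun n => complex.Re (u n))) (limn (fun n => complex.Im (u n))) = l.
Proof.
case: l => a b H; congr Complex; apply: cvg_lim => //; apply/cvgn_distP => e e0;
  have [N HN] := H e e0; exists N => n Hn; apply: le_lt_trans (HN n Hn).
- by rewrite -[a]/(complex.Re (a +i* b)%C) -ReB normc_ge_Re_abs.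
- by rewrite -[b]/(complex.Im (a +i* b)%C) -ImB normc_ge_Im_abs.
Qed.

Lemma cvgC_unique u a b : cvgC u a -> cvgC u b -> a = b.
Proof. by move=> /cvgC_lim <- /cvgC_lim <-. Qed.

Lemma cvgC_cauchy u :
  (forall e : R, 0 < e -> exists N, forall n, (N <= n)%N -> `|u n - u N|_C < e) ->
  exists l, cvgC u l.
Proof.
move=> H.
have [a /cvgn_distP Ha] : exists a : R, (fun n => complex.Re (u n)) @ \oo --> a.
  apply: cauchyn_cvg => e e0; have [N HN] := H e e0; exists N => n Hn.
  by apply: le_lt_trans (HN n Hn); rewrite -ReB normc_ge_Re_abs.
have [b /cvgn_distP Hb] : exists b : R, (fun n => complex.Im (u n)) @ \oo --> b.
  apply: cauchyn_cvg => e e0; have [N HN] := H e e0; exists N => n Hn.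
  by apply: le_lt_trans (HN n Hn); rewrite -ImB normc_ge_Im_abs.
exists (Complex a b) => e e0.
have e20 : 0 < e / 2 by rewrite divr_gt0.
have [N1 H1] := Ha _ e20; have [N2 H2] := Hb _ e20.
exists (maxn N1 N2) => n; rewrite geq_max => /andP[n1 n2].
apply: le_lt_trans (normc_le_ReIm _) _.
by rewrite ReB ImB /= [e]splitr ltrD ?H1 ?H2.
Qed.

Lemma cvgC_le_dist u l a e : cvgC u l ->
  (exists N, forall n, (N <= n)%N -> `|u n - a|_C <= e) -> `|l - a|_C <= e.
Proof.
move=> H [N HN]; rewrite leNgt; apply/negP => He.
have d0 : 0 < `|l - a|_C - e by rewrite subr_gt0.
have [N' HN'] := H _ d0.
have h1 := HN (maxn N N') (leq_maxl _ _).
have h2 := HN' (maxn N N') (leq_maxr _ _).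
have := le_normcD (l - u (maxn N N')) (u (maxn N N') - a).
rewrite addrA subrK normc_distC => /le_lt_trans /(_ (ltr_leD h2 h1)).
by rewrite subrK ltxx.
Qed.

Lemma cvgC_const l : cvgC (fun _ => l) l.
Proof. by move=> e e0; exists 0%N => n _; rewrite subrr Normc.normc0. Qed.

Lemma cvgC_eventually u v l : (exists N, forall n, (N <= n)%N -> u n = v n) ->
  cvgC u l -> cvgC v l.
Proof.
move=> [N HN] H e e0; have [N' HN'] := H e e0.
exists (maxn N N') => n; rewrite geq_max => /andP[nN nN'].
by rewrite -HN // HN'.
Qed.

Lemma cvgCD u v a b : cvgC u a -> cvgC v b -> cvgC (fun n => u n + v n) (a + b).
Proof.
move=> Hu Hv e e0.
have e20 : 0 < e / 2 by rewrite divr_gt0.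
have [N1 H1] := Hu _ e20; have [N2 H2] := Hv _ e20.
exists (maxn N1 N2) => n; rewrite geq_max => /andP[n1 n2].
rewrite opprD addrACA; apply: le_lt_trans (le_normcD _ _) _.
by rewrite [e]splitr ltrD ?H1 ?H2.
Qed.

Lemma cvgCMl u a c : cvgC u a -> cvgC (fun n => c * u n) (c * a).
Proof.
move=> Hu e e0.
have c0 : 0 < `|c|_C + 1 by rewrite ltr_wpDl ?normc_ge0.
have [N HN] := Hu _ (divr_gt0 e0 c0).
exists N => n Hn; rewrite -mulrBr Normc.normcM.
apply: (@le_lt_trans _ _ ((`|c|_C + 1) * `|u n - a|_C)).
  by rewrite ler_wpM2r ?normc_ge0 // lerDl.
by rewrite mulrC -ltr_pdivlMr //; apply: HN.
Qed.

Lemma cvgCB u v a b : cvgC u a -> cvgC v b -> cvgC (fun n => u n - v n) (a - b).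
Proof.
move=> Hu /(cvgCMl (-1)) Hv; rewrite -mulN1r.
by apply: cvgC_eventually (cvgCD Hu Hv); exists 0%N => n _; rewrite mulN1r.
Qed.

Lemma cvgC_sum (I : eqType) (r : seq I) (F : I -> nat -> R[i]) (l : I -> R[i]) :
  (forall i, i \in r -> cvgC (F i) (l i)) ->
  cvgC (fun n => \sum_(i <- r) F i n) (\sum_(i <- r) l i).
Proof.
elim: r => [|i r IH] H.
  by rewrite big_nil; apply: cvgC_eventually (cvgC_const 0); exists 0%N => n _; rewrite big_nil.
rewrite big_cons; apply: cvgC_eventually (cvgCD (H i (mem_head _ _)) (IH _)).
  by exists 0%N => n _; rewrite big_cons.
by move=> j jr; apply: H; rewrite inE jr orbT.
Qed.

End ComplexSequences.

Lemma big_nat_modn (V : zmodType) (F : nat -> V) p q :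
  \sum_(0 <= k < q * p) F (k %% p)%N = (\sum_(0 <= k < p) F k) *+ q.
Proof.
elim: q => [|q IH]; first by rewrite mul0n big_geq // mulr0n.
rewrite mulSn addnC (big_cat_nat _ (leq_addr _ _)) //= IH mulrSr; congr (_ + _).
rewrite -{1}[(q * p)%N]add0n big_addn addKn.
rewrite [in RHS]big_nat_cond [in LHS]big_nat_cond.
by apply: eq_bigr => k /andP [/andP [_ kp] _]; rewrite addnC modnMDl modn_small.
Qed.

Section Odometer.
Variable s : scale.
Implicit Types x y : Zs s.

Lemma sc_dvd_le m n : (m <= n)%N -> (s m %| s n)%N.
Proof.
move=> /subnK <-; elim: (n - m)%N => [|k IH]; first by rewrite add0n.
by apply: dvdn_trans IH _; rewrite addSn sc_dvd.
Qed.

Lemma zs_lt x m : (zs x m < s m)%N.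
Proof. by case: (proj2_sig x m). Qed.

Lemma zsS x m : zs x m = (zs x m.+1 %% s m)%N.
Proof. by case: (proj2_sig x m). Qed.

Lemma zs_mod x m n : (m <= n)%N -> zs x m = (zs x n %% s m)%N.
Proof.
move=> /subnK <-; elim: (n - m)%N => [|k IH].
  by rewrite add0n modn_small // zs_lt.
by rewrite IH addSn zsS modn_dvdm // sc_dvd_le // leq_addl.
Qed.

Lemma zs_inj x y : (forall m, zs x m = zs y m) -> x = y.
Proof.
case: x => x px; case: y => y py /= /funext exy; subst y.
by congr exist; apply: Prop_irrelevance.
Qed.

Lemma zs_iota k m : zs (Defs.iota s k) m = (k %% s m)%N.
Proof. by []. Qed.

Lemma zs_phi x m : zs (phi x) m = ((zs x m).+1 %% s m)%N.
Proof. by []. Qed.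

Lemma zs_eq_le x y m n : (m <= n)%N -> zs x n = zs y n -> zs x m = zs y m.
Proof. by move=> mn e; rewrite (zs_mod x mn) (zs_mod y mn) e. Qed.

Lemma phi_iota k : phi (Defs.iota s k) = Defs.iota s k.+1.
Proof. by apply: zs_inj => m; rewrite zs_phi !zs_iota -addn1 modnDml addn1. Qed.

End Odometer.

Lemma ex_common_bound (P : nat -> nat -> Prop) k :
    (forall r m M, (m <= M)%N -> P r m -> P r M) ->
    (forall r, (r < k)%N -> exists m, P r m) ->
  exists M, forall r, (r < k)%N -> P r M.
Proof.
move=> Pmono; elim: k => [|k IH] H; first by exists 0%N.
have [M1 HM1] := IH (fun r rk => H r (ltnW rk)).
have [M2 HM2] := H k (ltnSn k).
exists (maxn M1 M2) => r; rewrite ltnS leq_eqVlt => /orP [/eqP ->|rk].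
  by apply: Pmono HM2; rewrite leq_maxr.
by apply: Pmono (HM1 r rk); rewrite leq_maxl.
Qed.

(* König's lemma on the tree of cylinders: if f had no modulus of uniform
   continuity, a nested sequence of cylinders without modulus would single
   out a point at which f is not continuous. *)
Section UniformContinuity.
Variables (R : realType) (s : scale) (f : Zs s -> R[i]) (e : R).
Hypothesis hf : Zs_continuous f.
Hypothesis e_gt0 : 0 < e.

Definition cyl_modulus n r m := forall x y : Zs s,
  zs x n = r -> zs y n = r -> zs x m = zs y m -> `|f x - f y|_C < e.

Definition bad_cyl n r := ~ exists m, cyl_modulus n r m.

Lemma cyl_modulus_mono n r m M : (m <= M)%N ->
  cyl_modulus n r m -> cyl_modulus n r M.
Proof. by move=> mM H x y xr yr /(zs_eq_le mM); apply: H. Qed.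

Lemma bad_cyl_child n r : bad_cyl n r ->
  exists r', [/\ (r' < s n.+1)%N, (r' %% s n)%N = r & bad_cyl n.+1 r'].
Proof.
move=> Hbad; apply: contrapT => Hgood; apply: Hbad.
have [M HM] : exists M, forall r', (r' < s n.+1)%N ->
    (r' %% s n)%N = r -> cyl_modulus n.+1 r' M.
  apply: ex_common_bound => [r' m M mM Hm /Hm|r' r's].
    exact: cyl_modulus_mono.
  have [e1|ne] := eqVneq (r' %% s n)%N r; last by exists 0%N => /eqP; rewrite (negPf ne).
  apply: contrapT => Hr'; apply: Hgood; exists r'; split=> // -[m Hm].
  by apply: Hr'; exists m.
exists (maxn M n.+1) => x y xr yr exy.
have xy1 : zs x n.+1 = zs y n.+1 by apply: zs_eq_le exy; rewrite leq_maxr.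
apply: (HM (zs x n.+1)) => //; first exact: zs_lt.
- by rewrite -zsS.
- by apply: zs_eq_le exy; rewrite leq_maxl.
Qed.

Lemma bad_cyl_root :
    ~ (exists m, forall x y : Zs s, zs x m = zs y m -> `|f x - f y|_C < e) ->
  exists r, (r < s 0)%N /\ bad_cyl 0 r.
Proof.
move=> Hnot; apply: contrapT => Hgood; apply: Hnot.
have [M HM] : exists M, forall r, (r < s 0)%N -> cyl_modulus 0 r M.
  apply: ex_common_bound => [r m M|r r0]; first exact: cyl_modulus_mono.
  by apply: contrapT => Hr; apply: Hgood; exists r.
exists M => x y exy; apply: (HM (zs x 0)) => //; first exact: zs_lt.
by rewrite (zs_eq_le (leq0n M) exy).
Qed.

Lemma bad_cyl_branch r0 : (r0 < s 0)%N -> bad_cyl 0 r0 ->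
  exists x : Zs s, forall n, bad_cyl n (zs x n).
Proof.
move=> r0_lt b0.
have Hchild (nr : nat * nat) : exists r', bad_cyl nr.1 nr.2 ->
    [/\ (r' < s nr.1.+1)%N, (r' %% s nr.1)%N = nr.2 & bad_cyl nr.1.+1 r'].
  have [/bad_cyl_child [r' Hr']|] := pselect (bad_cyl nr.1 nr.2); first by exists r'.
  by exists 0%N.
have [next Hnext] := choice Hchild.
pose rr := fix rr n := if n is n'.+1 then next (n', rr n') else r0.
have rr_bad n : bad_cyl n (rr n).
  by elim: n => [|n IH] //; have [] := Hnext (n, rr n) IH.
have rr_compat n : (rr n < s n)%N /\ rr n = (rr n.+1 %% s n)%N.
  have [_ e1 _] := Hnext (n, rr n) (rr_bad n).
  split; last by rewrite /= e1.
  by case: n {e1} => [|n] //; have [] := Hnext (n, rr n) (rr_bad n).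
by exists (exist _ rr rr_compat).
Qed.

Lemma not_bad_cyl_everywhere (x : Zs s) : ~ forall n, bad_cyl n (zs x n).
Proof.
move=> Hx; have e20 : 0 < e / 2 by rewrite divr_gt0.
have [m Hm] := hf x e20; apply: (Hx m); exists m => x' y' x'm y'm _.
rewrite -(subrK (f x) (f x')) -addrA; apply: le_lt_trans (le_normcD _ _) _.
by rewrite [e]splitr ltrD // ?Hm // normc_distC Hm.
Qed.

Lemma Zs_unif_continuous :
  exists m, forall x y : Zs s, zs x m = zs y m -> `|f x - f y|_C < e.
Proof.
apply: contrapT => /bad_cyl_root [r [/bad_cyl_branch Hr /Hr [x]]].
exact: not_bad_cyl_everywhere.
Qed.

End UniformContinuity.

Section HaarIntegral.
Variables (R : realType) (s : scale).
Implicit Types f g : Zs s -> R[i].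

Lemma natr_sc_neq0 m : ((s m)%:R : R[i]) != 0.
Proof. by rewrite pnatr_eq0 -lt0n sc_gt0. Qed.

Lemma mean_sc_refine (F : nat -> R[i]) m n : (m <= n)%N ->
  (s m)%:R^-1 * \sum_(k < s m) F k = (s n)%:R^-1 * \sum_(k < s n) F (k %% s m)%N.
Proof.
move=> mn; have /dvdnP [q Hq] := sc_dvd_le s mn.
have q0 : (q%:R : R[i]) != 0.
  by apply: contraNneq (natr_sc_neq0 n) => q0; rewrite Hq natrM q0 mul0r.
rewrite -(big_mkord xpredT F) -(big_mkord xpredT (fun k => F (k %% s m)%N)).
rewrite Hq big_nat_modn natrM -mulr_natl; move: (natr_sc_neq0 m) q0.
by set a := (s m)%:R; set b := q%:R => a0 b0; field; rewrite a0 b0.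
Qed.

Lemma normc_mean_le (F : nat -> R[i]) n e :
  (forall k, (k < s n)%N -> `|F k|_C <= e) ->
  `|(s n)%:R^-1 * \sum_(k < s n) F k|_C <= e.
Proof.
move=> H; rewrite Normc.normcM Normc.normcV normc_nat ler_pdivrMl ?ltr0n ?sc_gt0 //.
apply: le_trans (normc_sum _ _ _) _.
apply: le_trans (_ : \sum_(k < s n) e <= _); first by apply: ler_sum => k _; apply: H.
by rewrite sumr_const card_ord mulr_natl.
Qed.

Lemma haar_avg_cauchy f : Zs_continuous f -> exists l, cvgC (haar_avg f) l.
Proof.
move=> hf; apply: cvgC_cauchy => e e0.
have e20 : 0 < e / 2 by rewrite divr_gt0.
have [N HN] := Zs_unif_continuous hf e20.
exists N => n Hn; rewrite /haar_avg (mean_sc_refine (fun k => f (Defs.iota s k)) Hn).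
rewrite -mulrBr -sumrB.
pose F k := f (Defs.iota s k) - f (Defs.iota s (k %% s N)).
apply: le_lt_trans (@normc_mean_le F n (e / 2) _) _.
  by move=> k _; apply/ltW/HN; rewrite !zs_iota modn_mod.
by rewrite ltr_pdivrMr // ltr_pMr // ltr1n.
Qed.

Lemma haar_intE f l : cvgC (haar_avg f) l -> haar_int f = l.
Proof. exact: cvgC_lim. Qed.

Lemma haar_int_cvg f : Zs_continuous f -> cvgC (haar_avg f) (haar_int f).
Proof. by move=> /haar_avg_cauchy [l Hl]; rewrite (haar_intE Hl). Qed.

Lemma Zs_continuous_cyl g m : (forall x y : Zs s, zs x m = zs y m -> g x = g y) ->
  Zs_continuous g.
Proof. by move=> H x e e0; exists m => y /H ->; rewrite subrr Normc.normc0. Qed.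

Lemma Zs_continuous_const (c : R[i]) : Zs_continuous (fun _ : Zs s => c).
Proof. exact: (@Zs_continuous_cyl _ 0%N). Qed.

Lemma Zs_continuousM f g : Zs_continuous f -> Zs_continuous g ->
  Zs_continuous (fun x => f x * g x).
Proof.
move=> hf hg x e e0.
pose A := `|g x|_C + 1; pose B := `|f x|_C + 1.
have A0 : 0 < A by rewrite ltr_wpDl ?normc_ge0.
have B0 : 0 < B by rewrite ltr_wpDl ?normc_ge0.
pose d := Num.min 1 (e / 2 / (A + B)).
have d0 : 0 < d by rewrite lt_min ltr01 !divr_gt0 // addr_gt0.
have dA : d <= e / 2 / (A + B) by rewrite ge_min lexx orbT.
have [m1 H1] := hf x _ d0; have [m2 H2] := hg x _ d0.
exists (maxn m1 m2) => y exy.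
have h1 := H1 y (zs_eq_le (leq_maxl _ _) exy).
have h2 := H2 y (zs_eq_le (leq_maxr _ _) exy).
have hgy : `|g y|_C <= A.
  rewrite -(subrK (g x) (g y)); apply: le_trans (le_normcD _ _) _.
  by rewrite addrC lerD2l (le_trans (ltW h2)) // ge_min lexx.
rewrite -(subrK (f x * g y) (f y * g y)) -mulrBl -addrA -mulrBr.
apply: le_lt_trans (le_normcD _ _) _; rewrite !Normc.normcM.
apply: (@le_lt_trans _ _ (e / 2 / (A + B) * A + B * (e / 2 / (A + B)))).
  apply: lerD; apply: ler_pM; rewrite ?normc_ge0 ?lerDl //.
  - exact: le_trans (ltW h1) dA.
  - exact: le_trans (ltW h2) dA.
rewrite [B * _]mulrC -mulrDr mulfVK ?(gt_eqF (addr_gt0 A0 B0)) //.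
by rewrite ltr_pdivrMr // ltr_pMr // ltr1n.
Qed.

Lemma Zs_continuous_phi f : Zs_continuous f -> Zs_continuous (fun x => f (phi x)).
Proof.
move=> hf x e e0; have [m Hm] := hf (phi x) e e0.
by exists m => y exy; apply: Hm; rewrite !zs_phi exy.
Qed.

Lemma haar_intMl (c : R[i]) f : Zs_continuous f ->
  haar_int (fun x => c * f x) = c * haar_int f.
Proof.
move=> hf; apply: haar_intE; apply: cvgC_eventually (cvgCMl c (haar_int_cvg hf)).
by exists 0%N => n _; rewrite /haar_avg -mulr_sumr mulrCA.
Qed.

Lemma haar_intB f g : Zs_continuous f -> Zs_continuous g ->
  haar_int (fun x => f x - g x) = haar_int f - haar_int g.
Proof.
move=> hf hg; apply: haar_intE.
apply: cvgC_eventually (cvgCB (haar_int_cvg hf) (haar_int_cvg hg)).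
by exists 0%N => n _; rewrite /haar_avg sumrB mulrBr.
Qed.

Lemma haar_int_const (c : R[i]) : haar_int (fun _ : Zs s => c) = c.
Proof.
apply: haar_intE; apply: cvgC_eventually (cvgC_const c); exists 0%N => n _.
by rewrite /haar_avg sumr_const card_ord -[c *+ _]mulr_natl mulrA mulVf ?mul1r ?natr_sc_neq0.
Qed.

(* The Riemann sums of f o phi and f differ by the telescoping term
   (f(s_n) - f(0)) / s_n, and s_n = 0 in Z/s_n. *)
Lemma haar_int_phi f : Zs_continuous f ->
  haar_int (fun x => f (phi x)) = haar_int f.
Proof.
move=> hf; apply: haar_intE => e e0.
have e20 : 0 < e / 2 by rewrite divr_gt0.
have [N1 H1] := haar_int_cvg hf e20.
have [N2 H2] := Zs_unif_continuous hf e20.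
exists (maxn N1 N2) => n; rewrite geq_max => /andP[n1 n2].
rewrite -(subrK (haar_avg f n) (haar_avg _ n)) -addrA.
apply: le_lt_trans (le_normcD _ _) _; rewrite [e]splitr ltrD ?H1 //.
rewrite /haar_avg -mulrBr; under eq_bigr do rewrite phi_iota.
rewrite -sumrB -(big_mkord xpredT (fun k => f (Defs.iota s k.+1) - f (Defs.iota s k))).
rewrite telescope_sumr // Normc.normcM Normc.normcV normc_nat.
apply: (@le_lt_trans _ _ `|f (Defs.iota s (s n)) - f (Defs.iota s 0)|_C).
  apply: ler_piMl; first exact: normc_ge0.
  by rewrite invf_le1 ?ltr0n ?sc_gt0 // ler1n sc_gt0.
by apply: H2; apply: (zs_eq_le n2); rewrite !zs_iota modnn mod0n.
Qed.

End HaarIntegral.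

Lemma prim_root_exists (F : closedFieldType) n : (0 < n)%N -> n%:R != 0 :> F ->
  {z : F | n.-primitive_root z}.
Proof.
move=> n_gt0 n_neq0; pose p : {poly F} := 'X^n - 1.
have [r Dp] := closed_field_poly_normal p; apply/sigW.
rewrite (monicP _) ?monicXnsubC // scale1r in Dp.
have rn1 : all n.-unity_root r by apply/allP=> z; rewrite -root_prod_XsubC -Dp.
have sz_r : (n < (size r).+1)%N by rewrite -(size_prod_XsubC r id) -Dp size_XnsubC.
have [|z] := hasP (has_prim_root n_gt0 rn1 _ sz_r); last by exists z.
by rewrite -separable_prod_XsubC -Dp separable_Xn_sub_1.
Qed.

Section RootsOfUnity.
Variables (R : realType) (s : scale).
Implicit Types z : R[i].

Definition prim_root_sc m : R[i] :=
  sval (prim_root_exists (sc_gt0 s m) (@natr_sc_neq0 R s m)).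

Lemma prim_root_scP m : (s m).-primitive_root (prim_root_sc m).
Proof. exact: svalP (prim_root_exists (sc_gt0 s m) (@natr_sc_neq0 R s m)). Qed.

Definition unity_roots m : seq R[i] := mkseq (fun i => prim_root_sc m ^+ i) (s m).

Lemma unity_roots_uniq m : uniq (unity_roots m).
Proof.
rewrite map_inj_in_uniq ?iota_uniq // => i j; rewrite !mem_iota /= !add0n => Hi Hj.
by move/eqP; rewrite (eq_prim_root_expr (prim_root_scP m)) !modn_small // => /eqP.
Qed.

Lemma mem_unity_roots m z : (z \in unity_roots m) = (z ^+ s m == 1).
Proof.
apply/idP/eqP => [/mapP [i _ ->]|/(prim_rootP (prim_root_scP m)) [i ->]].
  by rewrite -exprM mulnC exprM (prim_expr_order (prim_root_scP m)) expr1n.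
by apply: map_f; rewrite mem_iota add0n ltn_ord.
Qed.

Lemma big_unity_roots (V : zmodType) m (F : R[i] -> V) :
  \sum_(z <- unity_roots m) F z = \sum_(i < s m) F (prim_root_sc m ^+ i).
Proof. by rewrite /unity_roots /mkseq big_map -{1}(subn0 (s m)) big_mkord. Qed.

Lemma unity_roots_le m n : (m <= n)%N -> {subset unity_roots m <= unity_roots n}.
Proof.
move=> mn z; rewrite !mem_unity_roots => /eqP zm.
by have /dvdnP [q ->] := sc_dvd_le s mn; rewrite mulnC exprM zm expr1n.
Qed.

Lemma in_ZtP z : in_Zt s z <-> exists m, z ^+ s m = 1.
Proof.
split=> [[n [m [/dvdnP [q Hq] zn]]]|[m zm]]; last by exists (s m), m.
by exists m; rewrite Hq mulnC exprM zn expr1n.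
Qed.

Lemma in_Zt_unity_roots m z : z \in unity_roots m -> in_Zt s z.
Proof. by rewrite mem_unity_roots => /eqP zm; apply/in_ZtP; exists m. Qed.

Lemma normc_unity z n : (0 < n)%N -> z ^+ n = 1 -> `|z|_C = 1.
Proof.
move=> n0 zn; apply/eqP.
by rewrite -(pexpr_eq1 n0) ?normc_ge0 // -normcX zn Normc.normc1.
Qed.

Lemma conj_unity z n : z ^+ n = 1 -> (Num.conj z) ^+ n = 1.
Proof. by move=> zn; rewrite -rmorphXn zn rmorph1. Qed.

Lemma mul_conj_unity z n : (0 < n)%N -> z ^+ n = 1 -> z * Num.conj z = 1.
Proof.
by move=> n0 zn; rewrite -normCK -normc_normr (normc_unity n0 zn) expr1n.
Qed.

Lemma chiE z n (x : Zs s) : z ^+ s n = 1 -> chi z x = z ^+ zs x n.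
Proof.
move=> zn; rewrite /chi /level.
case: pselect => [P|NP]; last by case: NP; exists n; apply/eqP.
case: ex_minnP => L /eqP zL Hmin.
by rewrite (zs_mod x (Hmin n (introT eqP zn))) expr_mod.
Qed.

Lemma chi1 (x : Zs s) : chi 1 x = 1 :> R[i].
Proof. by rewrite /chi expr1n. Qed.

Lemma chi_phi z n (x : Zs s) : z ^+ s n = 1 -> chi z (phi x) = z * chi z x.
Proof. by move=> zn; rewrite !(chiE _ zn) zs_phi expr_mod // exprS. Qed.

Lemma Zs_continuous_chi z n : z ^+ s n = 1 -> Zs_continuous (@chi R s z).
Proof. by move=> zn; apply: (@Zs_continuous_cyl _ _ _ n) => x y e; rewrite !(chiE _ zn) e. Qed.

End RootsOfUnity.

Lemma sum_expr_unity (F : fieldType) (u : F) n : u ^+ n = 1 ->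
  \sum_(i < n) u ^+ i = if u == 1 then n%:R else 0.
Proof.
move=> un; have [->|u1] := eqVneq u 1.
  by under eq_bigr do rewrite expr1n; rewrite sumr_const card_ord.
apply: (mulfI (_ : u - 1 != 0)); first by rewrite subr_eq0.
by rewrite mulr0 -subrX1 un subrr.
Qed.

Lemma big_nat_eq_indicator (V : nzRingType) p x (c : V) : (x < p)%N ->
  \sum_(0 <= r < p) (r == x)%:R * c = c.
Proof.
move=> xp; rewrite big_mkord (bigD1 (Ordinal xp)) //= eqxx mul1r big1 ?addr0 //.
by move=> i; rewrite -val_eqE /= => /negPf ->; rewrite mul0r.
Qed.

Section Fourier.
Variables (R : realType) (s : scale).
Implicit Types (f g : Zs s -> R[i]) (z : R[i]).

Lemma fhat1 f : fhat f 1 = haar_int f.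
Proof.
by rewrite /fhat conjC1; congr haar_int; apply: funext => x; rewrite chi1 mulr1.
Qed.

Lemma haar_int_coboundary g : Zs_continuous g ->
  haar_int (fun x => g (phi x) - g x) = 0.
Proof.
by move=> hg; rewrite (haar_intB (Zs_continuous_phi hg) hg) (haar_int_phi hg) subrr.
Qed.

Lemma fhat_coboundary g z : Zs_continuous g -> in_Zt s z ->
  fhat (fun x => g (phi x) - g x) z = (z - 1) * fhat g z.
Proof.
move=> hg /in_ZtP [n zn]; rewrite /fhat; set w := Num.conj z.
have wn : w ^+ s n = 1 by apply: conj_unity.
pose h x := g x * chi w x.
have hc : Zs_continuous h by apply: Zs_continuousM hg (Zs_continuous_chi wn).
have hzc : Zs_continuous (fun x => z * h (phi x)).
  exact: Zs_continuousM (Zs_continuous_const z) (Zs_continuous_phi hc).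
rewrite (_ : (fun x => _) = (fun x => z * h (phi x) - h x)); last first.
  apply: funext => x; rewrite /h (chi_phi _ wn) mulrBl; congr (_ - _).
  by rewrite [RHS]mulrCA [z * _]mulrA (mul_conj_unity (sc_gt0 s n) zn) mul1r.
rewrite (haar_intB hzc hc) (haar_intMl _ (Zs_continuous_phi hc)) (haar_int_phi hc).
by rewrite mulrBl mul1r.
Qed.

Lemma haar_int_chi w n : w ^+ s n = 1 -> w != 1 -> haar_int (@chi R s w) = 0.
Proof.
move=> wn w1; have wc := Zs_continuous_chi wn.
have := haar_int_phi wc.
rewrite (_ : (fun x => _) = (fun x => w * chi w x)); last first.
  by apply: funext => x; rewrite (chi_phi _ wn).
rewrite haar_intMl // => /eqP; rewrite -subr_eq0 -{2}[haar_int _]mul1r -mulrBl.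
by rewrite mulf_eq0 subr_eq0 (negPf w1) => /eqP.
Qed.

Lemma fhat_const (c : R[i]) z : in_Zt s z -> z != 1 -> fhat (fun _ : Zs s => c) z = 0.
Proof.
move=> /in_ZtP [n zn] z1; have wn := conj_unity zn.
have w1 : Num.conj z != 1 by apply: contra z1 => /eqP/(congr1 Num.conj); rewrite conjCK conjC1 => ->.
by rewrite /fhat (haar_intMl c (Zs_continuous_chi wn)) (haar_int_chi wn w1) mulr0.
Qed.

Lemma sum_indicator_modn (V : nzRingType) m n x : (m <= n)%N -> (x < s m)%N ->
  \sum_(k < s n) (((k %% s m)%N == x)%:R * (s m)%:R : V) = (s n)%:R.
Proof.
move=> mn xm; have /dvdnP [q Hq] := sc_dvd_le s mn.
rewrite -(big_mkord xpredT (fun k => (((k %% s m)%N == x)%:R * (s m)%:R : V))).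
rewrite Hq (big_nat_modn (fun r => ((r == x)%:R * (s m)%:R : V))).
by rewrite big_nat_eq_indicator // natrM mulr_natl.
Qed.

Lemma sum_unity_roots_conjX m k x : (x < s m)%N ->
  \sum_(z <- unity_roots R s m) (Num.conj z) ^+ k * z ^+ x =
  ((k %% s m)%N == x)%:R * (s m)%:R.
Proof.
move=> xm; rewrite big_unity_roots; set W := prim_root_sc R s m.
have Wprim : (s m).-primitive_root W by apply: prim_root_scP.
have Wn : W ^+ s m = 1 by apply: prim_expr_order.
have WW : Num.conj W * W = 1 by rewrite mulrC (mul_conj_unity (sc_gt0 s m) Wn).
pose u := Num.conj W ^+ k * W ^+ x.
have uW : u * W ^+ k = W ^+ x by rewrite /u mulrAC -exprMn WW expr1n mul1r.
rewrite (eq_bigr (fun i : 'I_(s m) => u ^+ i)); last first.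
  by move=> i _; rewrite /u exprMn rmorphXn -!exprM !(mulnC i) !exprM.
have un : u ^+ s m = 1.
  by rewrite /u exprMn -!exprM !(mulnC _ (s m)) !exprM (conj_unity Wn) Wn !expr1n mulr1.
rewrite sum_expr_unity //.
have -> : (u == 1) = ((k %% s m)%N == x).
  rewrite -(modn_small xm) -(eq_prim_root_expr Wprim).
  apply/eqP/eqP => [u1|Wkx]; first by rewrite -uW u1 mul1r.
  by rewrite /u -Wkx -exprMn WW expr1n.
by case: eqP; rewrite ?mul1r ?mul0r.
Qed.

Lemma unity_roots_sc_le m n z : (m <= n)%N -> z \in unity_roots R s m -> z ^+ s n = 1.
Proof. by move=> mn /(unity_roots_le mn); rewrite mem_unity_roots => /eqP. Qed.

Lemma sum_unity_roots_haar_avg f m n x : (m <= n)%N -> (x < s m)%N ->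
  \sum_(z <- unity_roots R s m) z ^+ x * haar_avg (fun y => f y * chi (Num.conj z) y) n
  = (s n)%:R^-1 * \sum_(k < s n) f (Defs.iota s k) * (((k %% s m)%N == x)%:R * (s m)%:R).
Proof.
move=> mn xm.
transitivity (\sum_(z <- unity_roots R s m) (s n)%:R^-1 *
    \sum_(k < s n) f (Defs.iota s k) * (Num.conj z ^+ k * z ^+ x)).
  rewrite !big_seq; apply: eq_bigr => z zm.
  rewrite /haar_avg mulrCA; congr (_ * _); rewrite mulr_sumr; apply: eq_bigr => k _.
  have zn := conj_unity (unity_roots_sc_le mn zm).
  by rewrite (chiE _ zn) zs_iota expr_mod // mulrCA [_ * z ^+ x]mulrC.
rewrite -mulr_sumr exchange_big /=; congr (_ * _).
by apply: eq_bigr => k _; rewrite -mulr_sumr sum_unity_roots_conjX.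
Qed.

Lemma fourier_partial_sum_cyl_mean f m x : Zs_continuous f -> (x < s m)%N ->
  cvgC (fun n => (s n)%:R^-1 *
      \sum_(k < s n) f (Defs.iota s k) * (((k %% s m)%N == x)%:R * (s m)%:R))
    (\sum_(z <- unity_roots R s m) fhat f z * z ^+ x).
Proof.
move=> hf xm; apply: (@cvgC_eventually _ (fun n =>
  \sum_(z <- unity_roots R s m) z ^+ x * haar_avg (fun y => f y * chi (Num.conj z) y) n)).
  by exists m => n mn; rewrite sum_unity_roots_haar_avg.
under eq_bigr do rewrite mulrC.
apply: cvgC_sum => z zm; apply/cvgCMl/haar_int_cvg/(Zs_continuousM hf).
exact/Zs_continuous_chi/conj_unity/(unity_roots_sc_le (leqnn m) zm).
Qed.

Lemma fourier_inversion f (x : Zs s) : Zs_continuous f ->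
  cvgC (fun m => \sum_(z <- unity_roots R s m) fhat f z * z ^+ zs x m) (f x).
Proof.
move=> hf e e0; have e20 : 0 < e / 2 by rewrite divr_gt0.
have [m0 Hm0] := hf x _ e20; exists m0 => m Hm.
apply: (@le_lt_trans _ _ (e / 2)); last by rewrite ltr_pdivrMr // ltr_pMr // ltr1n.
apply: (cvgC_le_dist (fourier_partial_sum_cyl_mean hf (zs_lt x m))).
exists m => n mn; set c := fun k : nat => (((k %% s m)%N == zs x m)%:R * (s m)%:R : R[i]).
have Hc : \sum_(k < s n) c k = (s n)%:R by apply: sum_indicator_modn => //; apply: zs_lt.
have -> : f x = (s n)%:R^-1 * \sum_(k < s n) f x * c k.
  by rewrite -mulr_sumr Hc mulrCA mulVf ?mulr1 ?natr_sc_neq0.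
rewrite -mulrBr -sumrB; under eq_bigr do rewrite -mulrBl.
rewrite Normc.normcM Normc.normcV normc_nat ler_pdivrMl ?ltr0n ?sc_gt0 //.
apply: le_trans (normc_sum _ _ _) _.
have normc_c k : `|c k|_C = (((k %% s m)%N == zs x m)%:R * (s m)%:R).
  by rewrite Normc.normcM !normc_nat.
apply: (@le_trans _ _ (\sum_(k < s n) e / 2 * `|c k|_C)).
  apply: ler_sum => k _; rewrite Normc.normcM normc_c.
  have [hk|hk] := eqVneq (k %% s m)%N (zs x m); last by rewrite mulr0n !mul0r !mulr0.
  apply: ler_wpM2r; first by rewrite mulr_ge0 ?ler0n.
  by apply/ltW/Hm0/(zs_eq_le Hm); rewrite zs_iota hk.
by rewrite -mulr_sumr; under eq_bigr do rewrite normc_c; rewrite sum_indicator_modn ?zs_lt // mulrC.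
Qed.

End Fourier.

Section RootSeparation.
Variable R : realType.
Implicit Types z : R[i].

Lemma exists_Re_unityX_le0 z n : (0 < n)%N -> z ^+ n = 1 -> z != 1 ->
  exists2 j, (j < n)%N & complex.Re (z ^+ j) <= 0.
Proof.
move=> n0 zn z1; apply: contrapT => Hpos.
have {}Hpos (j : 'I_n) : 0 < complex.Re (z ^+ j).
  by rewrite ltNge; apply/negP => Hj; apply: Hpos; exists j.
have := sum_expr_unity zn; rewrite (negPf z1) => /(congr1 (@complex.Re R)).
rewrite Re_sum /=; case: n n0 Hpos {zn} => // n _ Hpos.
rewrite big_ord_recl => /eqP; rewrite gt_eqF // ltr_pwDl ?Hpos //.
by apply: sumr_ge0 => i _; apply/ltW.
Qed.

Lemma normc_subX_le z k : `|z|_C = 1 -> `|1 - z ^+ k|_C <= k%:R * `|1 - z|_C.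
Proof.
move=> z1; elim: k => [|k IH]; first by rewrite expr0 subrr Normc.normc0 mul0r.
have -> : 1 - z ^+ k.+1 = (1 - z ^+ k) + z ^+ k * (1 - z).
  by rewrite mulrBr mulr1 exprSr addrA subrK.
apply: le_trans (le_normcD _ _) _; rewrite Normc.normcM normcX z1 expr1n mul1r.
by rewrite -nat1r mulrDl mul1r addrC lerD2l.
Qed.

(* Some power z^j lies in the closed left half-plane, at distance >= 1 from 1. *)
Lemma normc_unity_sub1_ge z n : (0 < n)%N -> z ^+ n = 1 -> z != 1 ->
  1 <= n%:R * `|z - 1|_C.
Proof.
move=> n0 zn z1; have [j jn Hj] := exists_Re_unityX_le0 n0 zn z1.
apply: (@le_trans _ _ `|1 - z ^+ j|_C).
  apply: le_trans (normc_ge_Re_abs _); apply: le_trans (ler_norm _).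
  by rewrite ReB lerDl oppr_ge0.
apply: le_trans (normc_subX_le j (normc_unity n0 zn)) _.
by rewrite normc_distC ler_wpM2r ?normc_ge0 // ler_nat ltnW.
Qed.

Lemma ex_order z k : (0 < k)%N -> z ^+ k = 1 -> exists n, is_order z n.
Proof.
move=> k0 zk; have ex : exists k, (0 < k)%N && (z ^+ k == 1).
  by exists k; rewrite k0 zk eqxx.
case: (ex_minnP ex) => n /andP [n0 /eqP zn] Hmin; exists n; split => // j /andP [j0 jn].
by apply: contraL jn => zj; rewrite -leqNgt Hmin // j0.
Qed.

End RootSeparation.

Lemma big_uniq_le_split1 (T : eqType) (R : realDomainType) (l : seq T) z0 (F : T -> R) :
  uniq l -> 0 <= F z0 ->
  \sum_(z <- l) F z <= F z0 + \sum_(z <- l | z != z0) F z.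
Proof.
move=> ul F0; have [zl|zl] := boolP (z0 \in l); first by rewrite (bigD1_seq z0 zl ul).
rewrite [X in X <= _](_ : _ = \sum_(z <- l | z != z0) F z) ?lerDr //.
rewrite big_seq_cond [RHS]big_seq_cond; apply: eq_bigl => z.
by case: (boolP (z \in l)) => //= zl'; apply/esym/eqP => e; move: zl; rewrite -e zl'.
Qed.

Lemma big_uniq_subset_split (T : eqType) (V : zmodType) (r1 r2 : seq T) (F : T -> V) :
  uniq r1 -> uniq r2 -> {subset r1 <= r2} ->
  \sum_(z <- r2) F z = \sum_(z <- r1) F z + \sum_(z <- r2 | z \notin r1) F z.
Proof.
move=> u1 u2 sub; rewrite (bigID (fun z => z \in r1)) /=; congr (_ + _).
rewrite -big_filter; apply/perm_big/uniq_perm; rewrite ?filter_uniq //.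
by move=> z; rewrite mem_filter; case: (boolP (z \in r1)) => // /sub ->.
Qed.

Section LengthFunction.
Variables (R : realType) (s : scale) (lam : R[i] -> R).
Hypothesis Hlam : is_length s lam.

Lemma in_Zt1 : in_Zt s (1 : R[i]).
Proof. by apply/in_ZtP; exists 0%N; rewrite expr1n. Qed.

Lemma lam1 : lam 1 = 1.
Proof. by case: Hlam => _ H _ _; apply/(H _ in_Zt1). Qed.

Lemma lam_ge0 z : in_Zt s z -> 0 <= lam z.
Proof. by case: Hlam => H _ _ _ /H; apply: le_trans. Qed.

(* |z - 1|^-1 <= ord z <= (lam z / c)^(1/alpha) <= c^-M lam z^M. *)
Lemma normc_inv_sub1_le : grows_fast s lam ->
  exists (K : R) (M : nat), 0 <= K /\
    forall z, in_Zt s z -> z != 1 -> `|(z - 1)^-1|_C <= K * lam z ^+ M.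
Proof.
case=> c [al [c0 al0 Hc]].
pose M := Num.Def.archi_bound (al^-1).
have HM : al^-1 < M%:R by apply: archi_boundP; rewrite invr_ge0 ltW.
exists (c^-1 ^+ M), M; split; first by rewrite exprn_ge0 // invr_ge0 ltW.
move=> z zZ z1; have [m zm] := (in_ZtP _ z).1 zZ.
have [n [n0 zn Hn]] := ex_order (sc_gt0 s m) zm.
have Hcz := Hc z n zZ (And3 n0 zn Hn).
have h1 := normc_unity_sub1_ge n0 zn z1.
have d0 : 0 < `|z - 1|_C.
  by rewrite lt_def normc_ge0 andbT; apply: contra_eq_neq h1 => ->; rewrite mulr0 ler10.
rewrite Normc.normcV; apply: (@le_trans _ _ n%:R); first by rewrite -[_^-1]mul1r ler_pdivrMr.
apply: (@le_trans _ _ (n%:R `^ (al * M%:R))).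
  rewrite -{1}(powRr1 (ler0n _ n)); apply: ler_powR; first by rewrite ler1n.
  by rewrite -ler_pdivrMl // mulr1 ltW.
rewrite powRrM powR_mulrn ?powR_ge0 // -exprMn.
apply: lerXn2r; rewrite ?nnegrE ?powR_ge0 ?mulr_ge0 ?invr_ge0 ?lam_ge0 ?(ltW c0) //.
by rewrite mulrC ler_pdivlMr // mulrC.
Qed.

Lemma C_RD_const (c : R[i]) : C_RD lam (fun _ : Zs s => c).
Proof.
split=> [|N]; first exact: Zs_continuous_const.
exists `|c|_C => l ul lZ.
have F0 : 0 <= `|fhat (fun _ : Zs s => c) 1|_C * lam 1 ^+ N.
  by rewrite lam1 expr1n mulr1 normc_ge0.
apply: le_trans (big_uniq_le_split1 ul F0) _.
rewrite big1_seq ?addr0 ?fhat1 ?haar_int_const ?lam1 ?expr1n ?mulr1 //.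
by move=> z /andP [z1 zl]; rewrite fhat_const ?Normc.normc0 ?mul0r //; apply: lZ.
Qed.

Section Coboundary.
Variables (f : Zs s -> R[i]) (K : R) (M : nat).
Hypothesis f_RD : C_RD lam f.
Hypothesis f_mean0 : haar_int f = 0.
Hypothesis K_ge0 : 0 <= K.
Hypothesis small_divisors :
  forall z, in_Zt s z -> z != 1 -> `|(z - 1)^-1|_C <= K * lam z ^+ M.

Definition cob_coef (z : R[i]) := fhat f z * (z - 1)^-1.

Lemma fhat_f1 : fhat f 1 = 0.
Proof. by rewrite fhat1. Qed.

Lemma normc_cob_coef z : in_Zt s z ->
  `|cob_coef z|_C <= K * (`|fhat f z|_C * lam z ^+ M).
Proof.
move=> zZ; have [->|z1] := eqVneq z 1.
  by rewrite /cob_coef fhat_f1 mul0r Normc.normc0 !mulr_ge0 ?normc_ge0 ?exprn_ge0 ?lam1.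
by rewrite /cob_coef Normc.normcM mulrCA ler_wpM2l ?normc_ge0 ?small_divisors.
Qed.

Lemma cob_coefK z : cob_coef z * (z - 1) = fhat f z.
Proof.
have [->|z1] := eqVneq z 1; first by rewrite subrr mulr0 fhat_f1.
by rewrite /cob_coef mulfVK // subr_eq0.
Qed.

Definition cob_partial m (x : Zs s) :=
  \sum_(z <- unity_roots R s m) cob_coef z * z ^+ zs x m.

Definition cob_mass m := \sum_(z <- unity_roots R s m) `|cob_coef z|_C.

Lemma cob_mass_diff m n : (m <= n)%N ->
  cob_mass n - cob_mass m =
  \sum_(z <- unity_roots R s n | z \notin unity_roots R s m) `|cob_coef z|_C.
Proof.
move=> mn; rewrite /cob_mass (big_uniq_subset_split _ (unity_roots_uniq R s m)
  (unity_roots_uniq R s n) (unity_roots_le mn)).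
by rewrite addrC addKr.
Qed.

Lemma cob_mass_bounded : exists B, forall m, cob_mass m <= B.
Proof.
have [B HB] := f_RD.2 M; exists (K * B) => m.
apply: (@le_trans _ _ (\sum_(z <- unity_roots R s m) K * (`|fhat f z|_C * lam z ^+ M))).
  rewrite /cob_mass !big_seq; apply: ler_sum => z zm.
  exact/normc_cob_coef/in_Zt_unity_roots/zm.
rewrite -mulr_sumr ler_wpM2l // HB ?unity_roots_uniq // => z.
exact: in_Zt_unity_roots.
Qed.

Lemma cob_mass_cauchy e : 0 < e -> exists N, forall m n, (N <= m)%N -> (m <= n)%N ->
  cob_mass n - cob_mass m < e.
Proof.
move=> e0; have e20 : 0 < e / 2 by rewrite divr_gt0.
have mono : {homo cob_mass : m n / (m <= n)%N >-> m <= n}.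
  by move=> m n mn; rewrite -subr_ge0 cob_mass_diff // sumr_ge0 // => z _; apply: normc_ge0.
have [B HB] := cob_mass_bounded.
have ub : has_ubound (range cob_mass) by exists B => _ [m _ <-].
have /cvgn_distP lim_mass := nondecreasing_cvgn mono ub.
have [N HN] := lim_mass _ e20; exists N => m n Nm mn.
rewrite -(subrK (sup (range cob_mass)) (cob_mass n)) -addrA.
apply: le_lt_trans (ler_norm _) _; apply: le_lt_trans (ler_normD _ _) _.
rewrite [e]splitr ltrD //; first exact/HN/(leq_trans Nm).
by rewrite distrC; apply: HN.
Qed.

Lemma cob_partial_diff m n x : (m <= n)%N ->
  `|cob_partial n x - cob_partial m x|_C <= cob_mass n - cob_mass m.
Proof.
move=> mn; have -> : cob_partial m x =
    \sum_(z <- unity_roots R s m) cob_coef z * z ^+ zs x n.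
  rewrite /cob_partial !big_seq; apply: eq_bigr => z.
  by rewrite mem_unity_roots => /eqP zm; rewrite (zs_mod x mn) expr_mod.
rewrite /cob_partial (big_uniq_subset_split _ (unity_roots_uniq R s m)
  (unity_roots_uniq R s n) (unity_roots_le mn)) addrC addKr cob_mass_diff //.
apply: le_trans (normc_sum _ _ _) _.
rewrite big_seq_cond [X in _ <= X]big_seq_cond; apply: ler_sum.
move=> z /andP [+ _]; rewrite mem_unity_roots => /eqP zn.
by rewrite Normc.normcM normcX (normc_unity (sc_gt0 s n) zn) expr1n mulr1.
Qed.

Definition cob_sol (x : Zs s) : R[i] :=
  Complex (limn (fun m => complex.Re (cob_partial m x)))
          (limn (fun m => complex.Im (cob_partial m x))).

Lemma cob_partial_cvg x : cvgC (fun m => cob_partial m x) (cob_sol x).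
Proof.
have [l Hl] : exists l, cvgC (fun m => cob_partial m x) l.
  apply: cvgC_cauchy => e e0; have [N HN] := cob_mass_cauchy e0.
  by exists N => n Nn; apply: le_lt_trans (cob_partial_diff _ Nn) (HN _ _ (leqnn N) Nn).
by rewrite /cob_sol (cvgC_lim Hl).
Qed.

Lemma cob_partial_unif e : 0 < e ->
  exists N, forall x, `|cob_sol x - cob_partial N x|_C <= e.
Proof.
move=> e0; have [N HN] := cob_mass_cauchy e0; exists N => x.
apply: (cvgC_le_dist (cob_partial_cvg x)); exists N => n Nn.
exact/(le_trans (cob_partial_diff _ Nn))/ltW/HN.
Qed.

Lemma Zs_continuous_cob_sol : Zs_continuous cob_sol.
Proof.
move=> x e e0; have e40 : 0 < e / 4 by rewrite divr_gt0.
have [N HN] := cob_partial_unif e40; exists N => y exy.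
have gN : cob_partial N y = cob_partial N x by rewrite /cob_partial exy.
have -> : cob_sol y - cob_sol x =
    (cob_sol y - cob_partial N y) + (cob_partial N x - cob_sol x).
  by rewrite gN addrA subrK.
apply: le_lt_trans (le_normcD _ _) _; rewrite [`|cob_partial N x - _|_C]normc_distC.
by apply: (@le_lt_trans _ _ (e / 4 + e / 4)); [apply: lerD; apply: HN|lra].
Qed.

Lemma cob_partial_phi m x : cob_partial m (phi x) - cob_partial m x =
  \sum_(z <- unity_roots R s m) fhat f z * z ^+ zs x m.
Proof.
rewrite /cob_partial -sumrB !big_seq; apply: eq_bigr => z.
rewrite mem_unity_roots => /eqP zm.
by rewrite zs_phi expr_mod // exprS -cob_coefK; ring.
Qed.

Lemma cob_solP : f = (fun x => cob_sol (phi x) - cob_sol x).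
Proof.
apply: funext => x; apply: (cvgC_unique (fourier_inversion x f_RD.1)).
apply: cvgC_eventually (cvgCB (cob_partial_cvg (phi x)) (cob_partial_cvg x)).
by exists 0%N => m _; apply: cob_partial_phi.
Qed.

Lemma fhat_cob_sol z : in_Zt s z -> z != 1 -> fhat cob_sol z = cob_coef z.
Proof.
move=> zZ z1; have := fhat_coboundary Zs_continuous_cob_sol zZ; rewrite -cob_solP.
by rewrite /cob_coef => ->; rewrite mulrC mulKf // subr_eq0.
Qed.

Lemma C_RD_cob_sol : C_RD lam cob_sol.
Proof.
split=> [|N]; first exact: Zs_continuous_cob_sol.
have [B HB] := f_RD.2 (N + M)%N.
exists (`|fhat cob_sol 1|_C + K * B) => l ul lZ.
have F0 : 0 <= `|fhat cob_sol 1|_C * lam 1 ^+ N by rewrite lam1 expr1n mulr1 normc_ge0.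
apply: le_trans (big_uniq_le_split1 ul F0) _.
apply: lerD; first by rewrite lam1 expr1n mulr1.
apply: (@le_trans _ _ (\sum_(z <- l | z != 1) K * (`|fhat f z|_C * lam z ^+ (N + M)))).
  rewrite big_seq_cond [X in _ <= X]big_seq_cond; apply: ler_sum => z /andP [/lZ zZ z1].
  have -> : K * (`|fhat f z|_C * lam z ^+ (N + M)) =
      K * (`|fhat f z|_C * lam z ^+ M) * lam z ^+ N by rewrite exprD; ring.
  by rewrite fhat_cob_sol // ler_wpM2r ?exprn_ge0 ?lam_ge0 ?normc_cob_coef.
rewrite -mulr_sumr ler_wpM2l // -big_filter HB ?filter_uniq // => z.
by rewrite mem_filter => /andP [_ /lZ].
Qed.

End Coboundary.

End LengthFunction.

Theorem mainTheorem10 (R : realType) (s : scale) (lam : R[i] -> R)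
    (Hlam : is_length s lam) (Hgrow : grows_fast s lam) :
  (forall c : R[i], exists f : Zs s -> R[i], C_RD lam f /\ haar_int f = c) /\
  (forall f : Zs s -> R[i], C_RD lam f ->
     (haar_int f = 0 <->
      exists g : Zs s -> R[i], C_RD lam g /\ f = (fun x => g (phi x) - g x))).
Proof.
split=> [c|f f_RD].
  by exists (fun _ => c); split; [apply: C_RD_const | apply: haar_int_const].
split=> [f_mean0|[g [[g_cont _] ->]]]; last exact: haar_int_coboundary.
have [K [M [K_ge0 small_divisors]]] := normc_inv_sub1_le Hlam Hgrow.
exists (cob_sol f); split; last exact: cob_solP f_RD f_mean0 K_ge0 small_divisors.
exact: C_RD_cob_sol f_RD f_mean0 K_ge0 small_divisors.
Qed.
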